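(* For any $b\in B_k$ there exist unique $b_-\in\mathcal{U}_-$ and $b_+\in\mathcal{P}_+$ such that $b=b_-b_+$.
   Context: Let $\mathfrak{g}=\mathfrak{gl}_n(\mathbb{C})$, $\mathfrak{t}$ a Cartan subalgebra, $k>1$, $T=\sum_{i=1}^{k-1}T_iz^{-i}$ with $T_i\in\mathfrak{t}$, $T_{k-1}\neq0$. $B_k=\{b=\sum_{i=0}^{k-1}b_iz^i:b_0=1,b_i\in\mathfrak{g}\}\subset\mathrm{GL}_n(\mathbb{C}[z]/(z^k))$. For $i=0,\dots,k-2$ let $\mathbb{C}^n=\bigoplus_{p\in J_i}V^{(i)}_p$ be the decomposition into simultaneous eigenspaces of $(T_{i+1},\dots,T_{k-1})$, with $\pi_i:J_j\to J_i$ ($j\le i$) the natural surjections; fix total orders on the $J_i$ such that for $i<k-2$, $\pi_{i+1}(p)<\pi_{i+1}(q)\Rightarrow p<q$. Let $\mathfrak{p}_i^+=\bigoplus_{p\ge q}\mathrm{Hom}(V^{(i)}_p,V^{(i)}_q)$, $\mathfrak{u}_i^-=\bigoplus_{p<q}\mathrm{Hom}(V^{(i)}_p,V^{(i)}_q)$ (sums over $p,q\in J_i$), $\mathfrak{p}^+_{k-1}=\mathfrak{g}$, $\mathfrak{u}^-_{k-1}=0$. $\mathcal{U}_-=\{b\in B_k:b_i\in\mathfrak{u}_i^-,1\le i\le k-1\}$, $\mathcal{P}_+=\{b\in B_k:b_i\in\mathfrak{p}_i^+,1\le i\le k-1\}$. *)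

From HB Require Import structures.
From mathcomp Require Import all_boot all_order all_algebra.
From mathcomp Require Import complex.
From mathcomp Require Import Rstruct.
Set Implicit Arguments. Unset Strict Implicit. Unset Printing Implicit Defensive.
Import Order.TTheory GRing.Theory Num.Theory.
Local Open Scope ring_scope.

Definition C : fieldType := (Rdefinitions.R)[i].

(* Cartan subalgebras of gl_n(C) are exactly P (diagonal matrices) P^{-1}
   for invertible P; [in_cartan P X] says X lies in that Cartan subalgebra. *)
Definition in_cartan (n : nat) (P X : 'M[C]_n) : Prop :=
  exists D : 'M[C]_n, is_diag_mx D /\ X = P *m D *m invmx P.

(* v lies in the simultaneous eigenspace V^{(i)}_p of (T_{i+1},...,T_{k-1})
   for the eigenvalue tuple p = (p_0, ..., p_{k-2-i}), p_j the eigenvalue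
   of T_{i+1+j}. *)
Definition inV (n k : nat) (T : nat -> 'M[C]_n) (i : nat) (p : seq C)
    (v : 'cV[C]_n) : Prop :=
  forall j : nat, (j < k.-1 - i)%N -> T (i.+1 + j)%N *m v = p`_j *: v.

Definition inJ (n k : nat) (T : nat -> 'M[C]_n) (i : nat) (p : seq C) : Prop :=
  size p = (k.-1 - i)%N /\ exists v : 'cV[C]_n, v != 0 /\ inV k T i p v.

Definition strict_total_on (J : seq C -> Prop) (r : seq C -> seq C -> Prop)
    : Prop :=
  [/\ (forall p, J p -> ~ r p p),
      (forall p q s, J p -> J q -> J s -> r p q -> r q s -> r p s)
    & (forall p q, J p -> J q -> p <> q -> r p q \/ r q p)].

(* X maps every V^{(i)}_p into the sum of the V^{(i)}_q with sel p q,
   i.e. X lies in  (+)_{p,q in J_i, sel p q} Hom(V^{(i)}_p, V^{(i)}_q). *)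
Definition block_sum (n k : nat) (T : nat -> 'M[C]_n) (i : nat)
    (sel : seq C -> seq C -> Prop) (X : 'M[C]_n) : Prop :=
  forall (p : seq C) (v : 'cV[C]_n), inJ k T i p -> inV k T i p v ->
    exists s : seq (seq C * 'cV[C]_n),
      (forall x, x \in s -> [/\ inJ k T i x.1, sel p x.1 & inV k T i x.1 x.2])
      /\ X *m v = \sum_(x <- s) x.2.

(* p_i^+ = (+)_{p >= q} Hom(V_p, V_q) for i < k-1, and p_{k-1}^+ = g *)
Definition in_pplus (n k : nat) (T : nat -> 'M[C]_n)
    (ord : nat -> seq C -> seq C -> Prop) (i : nat) (X : 'M[C]_n) : Prop :=
  if (i < k.-1)%N then block_sum k T i (fun p q => q = p \/ ord i q p) X
  else True.

(* u_i^- = (+)_{p < q} Hom(V_p, V_q) for i < k-1, and u_{k-1}^- = 0 *)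
Definition in_uminus (n k : nat) (T : nat -> 'M[C]_n)
    (ord : nat -> seq C -> seq C -> Prop) (i : nat) (X : 'M[C]_n) : Prop :=
  if (i < k.-1)%N then block_sum k T i (fun p q => ord i p q) X
  else X = 0.

(* An element b = sum_{i<k} b_i z^i of GL_n(C[z]/(z^k)) is represented by
   its coefficient sequence b : nat -> 'M_n; only b_0, ..., b_{k-1} matter. *)
Definition inB (n : nat) (b : nat -> 'M[C]_n) : Prop := b 0%N = 1%:M.

(* product in C[z]/(z^k) (coefficients; truncation handled by eqk) *)
Definition trunc_mul (n : nat) (a c : nat -> 'M[C]_n) (m : nat) : 'M[C]_n :=
  \sum_(j < m.+1) a j *m c (m - j)%N.

Definition eqk (n k : nat) (a c : nat -> 'M[C]_n) : Prop :=
  forall m : nat, (m < k)%N -> a m = c m.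

Definition in_Uminus (n k : nat) (T : nat -> 'M[C]_n)
    (ord : nat -> seq C -> seq C -> Prop) (b : nat -> 'M[C]_n) : Prop :=
  inB b /\ forall i : nat, (1 <= i <= k.-1)%N -> in_uminus k T ord i (b i).

Definition in_Pplus (n k : nat) (T : nat -> 'M[C]_n)
    (ord : nat -> seq C -> seq C -> Prop) (b : nat -> 'M[C]_n) : Prop :=
  inB b /\ forall i : nat, (1 <= i <= k.-1)%N -> in_pplus k T ord i (b i).

From HB Require Import structures.
From mathcomp Require Import all_boot all_order all_algebra.
From mathcomp Require Import complex Rstruct zify.
From Stdlib Require Import Classical ClassicalEpsilon.
Import Order.TTheory GRing.Theory Num.Theory.
Local Open Scope ring_scope.

(* Conjugating by P diagonalises all the T_t, so the simultaneous eigenspaces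
   V^(i)_p are spanned by the columns of P whose eigenvalue tuple is p, and a
   matrix lies in a block sum iff its conjugate vanishes at the entries (a, l)
   whose tuples are not selected. Hence gl_n is the direct sum of u_i^- (the
   entries strictly below in the order) and p_i^+ (the others) at every
   level i. Comparing coefficients of z^m in b = b_- b_+ then gives
   b_m = (b_-)_m + (b_+)_m + (terms of lower degree), which determines the
   factors degree by degree. *)

Lemma diag_mulmx_col (R : pzRingType) m (D : 'M[R]_m) (w : 'cV[R]_m) a :
  is_diag_mx D -> (D *m w) a 0 = D a a * w a 0.
Proof.
move=> /is_diag_mxP dD; rewrite !mxE (bigD1 a) //= big1 ?addr0 // => l la.
by rewrite dD ?mul0r // eq_sym.
Qed.

Lemma conjmx_cartan n (P X : 'M[C]_n) :
  P \in unitmx -> in_cartan P X -> is_diag_mx (conjmx (invmx P) X).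
Proof. by move=> Pu [D [dD ->]]; rewrite -conjumx // conjmxK. Qed.

Lemma conjmxD (F : fieldType) m n (V : 'M[F]_(m, n)) (X Y : 'M[F]_n) : conjmx V (X + Y) = conjmx V X + conjmx V Y.
Proof. by rewrite /conjmx mulmxDr mulmxDl. Qed.

Lemma conjmxB (F : fieldType) m n (V : 'M[F]_(m, n)) (X Y : 'M[F]_n) : conjmx V (X - Y) = conjmx V X - conjmx V Y.
Proof. by rewrite /conjmx mulmxBr mulmxBl. Qed.

Section EigenBasis.

Variables (n k : nat) (P : 'M[C]_n) (T : nat -> 'M[C]_n).
Hypothesis P_unit : P \in unitmx.

Local Notation D t := (conjmx (invmx P) (T t)).

Hypothesis D_diag : forall t, (1 <= t <= k.-1)%N -> is_diag_mx (D t).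

(* The index p in J_i of the eigenspace V^(i)_p containing the a-th column of P. *)
Definition eigtuple (i : nat) (a : 'I_n) : seq C :=
  mkseq (fun j => D (i.+1 + j)%N a a) (k.-1 - i).

Lemma mulmx_T t (v : 'cV[C]_n) : T t *m v = P *m (D t *m (invmx P *m v)).
Proof. by rewrite conjVmx // !mulmxA mulmxV // mul1mx mulmxK. Qed.

Lemma coords_col a : invmx P *m col a P = delta_mx a 0.
Proof. by rewrite colE mulKmx. Qed.

Lemma col_unit_neq0 a : col a P != 0.
Proof.
apply/eqP => /(congr1 (mulmx (invmx P))); rewrite coords_col mulmx0.
by move/matrixP/(_ a 0); rewrite !mxE !eqxx; apply/eqP; rewrite oner_eq0.
Qed.

Lemma eigtuple_inV i a : inV k T i (eigtuple i a) (col a P).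
Proof.
move=> j lt_j; rewrite nth_mkseq // mulmx_T coords_col [in RHS]colE scalemxAr.
congr (P *m _); apply/matrixP => x y; rewrite (ord1 y) [RHS]mxE.
rewrite diag_mulmx_col; last by apply: D_diag; lia.
by rewrite [delta_mx a 0 x 0]mxE; case: (eqVneq x a) => [->|_]; rewrite ?mulr0.
Qed.

Lemma inJ_eigtuple i a : inJ k T i (eigtuple i a).
Proof.
split; first by rewrite size_mkseq.
by exists (col a P); split; [exact: col_unit_neq0 | exact: eigtuple_inV].
Qed.

Lemma inV_eigtuple i p v a : size p = (k.-1 - i)%N -> inV k T i p v ->
  (invmx P *m v) a 0 != 0 -> eigtuple i a = p.
Proof.
move=> size_p p_v va_neq0; apply: (@eq_from_nth _ 0); first by rewrite size_mkseq.
move=> j; rewrite size_mkseq => lt_j; rewrite nth_mkseq //.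
have /(congr1 (mulmx (invmx P))) := p_v j lt_j.
rewrite mulmx_T mulKmx // -scalemxAr => /matrixP/(_ a 0).
rewrite diag_mulmx_col; last by apply: D_diag; lia.
by move=> e; apply: (mulIf va_neq0); rewrite e mxE.
Qed.

Lemma conjmx_entry_col X a l :
  conjmx (invmx P) X a l = (invmx P *m (X *m col l P)) a 0.
Proof. by rewrite colE conjVmx // !mulmxA -colE [RHS]mxE. Qed.

Lemma block_sumP i (sel : seq C -> seq C -> Prop) X :
  block_sum k T i sel X <->
  (forall a l, ~ sel (eigtuple i l) (eigtuple i a) -> conjmx (invmx P) X a l = 0).
Proof.
split=> [X_sel a l nsel | X0].
  rewrite conjmx_entry_col.
  have [s [s_sel ->]] := X_sel _ _ (inJ_eigtuple i l) (eigtuple_inV i l).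
  rewrite mulmx_sumr summxE big1_seq // => x /andP [_ xs].
  have [Jx selx Vx] := s_sel x xs; apply/eqP; apply: contraT.
  by move=> /(inV_eigtuple i _ _ a Jx.1 Vx) ea; case: nsel; rewrite ea; exact: selx.
move=> p v Jp Vp; pose w := invmx P *m v; pose y := conjmx (invmx P) X *m w.
have Xv : X *m v = P *m y by rewrite /y /w conjVmx // !mulmxA mulmxV // mul1mx mulmxK.
pose supp := [seq a <- index_enum 'I_n | y a 0 != 0].
exists [seq (eigtuple i a, y a 0 *: col a P) | a <- supp]; split.
  move=> x /mapP [a]; rewrite mem_filter => /andP [ya_neq0 _] -> /=; split.
  - exact: inJ_eigtuple.
  - apply: NNPP => nsel; move/eqP: ya_neq0; apply; rewrite /y mxE big1 // => l _.
    have [->|wl] := eqVneq (w l 0) 0; first by rewrite mulr0.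
    by rewrite X0 ?mul0r // (inV_eigtuple i p v l Jp.1 Vp wl).
  - move=> j lt_j; rewrite -scalemxAr (eigtuple_inV i a j lt_j) !scalerA mulrC.
    by rewrite nth_mkseq.
rewrite Xv {1}(matrix_sum_delta y) mulmx_sumr big_map big_filter.
rewrite (bigID (fun a => y a 0 != 0)) /= [X in _ + X]big1 ?addr0.
  by apply: eq_bigr => a _; rewrite big_ord1 colE -scalemxAr.
by move=> a /negPn/eqP ya0; rewrite big_ord1 ya0 scale0r mulmx0.
Qed.

Variable ord : nat -> seq C -> seq C -> Prop.

Lemma uminus_pplus_decomp i X :
  ((i < k.-1)%N -> strict_total_on (inJ k T i) (ord i)) ->
  exists Xm Xp, [/\ in_uminus k T ord i Xm, in_pplus k T ord i Xp & X = Xm + Xp].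
Proof.
rewrite /in_uminus /in_pplus; case: ltnP => _ ord_i; last first.
  by exists 0, X; rewrite add0r.
have [_ _ ord_total] := ord_i isT.
pose Y := conjmx (invmx P) X.
pose Ym := \matrix_(a, l)
  if excluded_middle_informative (ord i (eigtuple i l) (eigtuple i a))
  then Y a l else 0.
pose Xm := conjmx P Ym.
have conj_Xm : conjmx (invmx P) Xm = Ym by rewrite conjmxK.
exists Xm, (X - Xm); split; last by rewrite addrC subrK.
  apply/block_sumP => a l nsel; rewrite conj_Xm mxE.
  by case: excluded_middle_informative.
apply/block_sumP => a l nsel; rewrite conjmxB conj_Xm !mxE.
case: excluded_middle_informative => [?|nlt]; first by rewrite subrr.
case: nsel; have [->|ne] := eqVneq (eigtuple i a) (eigtuple i l); first by left.
by right; have [] := ord_total _ _ (inJ_eigtuple i a) (inJ_eigtuple i l) (elimN eqP ne).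
Qed.

Lemma uminus_pplus_unique i Ym Yp Ym' Yp' :
  ((i < k.-1)%N -> strict_total_on (inJ k T i) (ord i)) ->
  in_uminus k T ord i Ym -> in_pplus k T ord i Yp ->
  in_uminus k T ord i Ym' -> in_pplus k T ord i Yp' ->
  Ym + Yp = Ym' + Yp' -> Ym = Ym' /\ Yp = Yp'.
Proof.
rewrite /in_uminus /in_pplus; case: ltnP => _ ord_i; last first.
  by move=> -> _ -> _; rewrite !add0r.
have [ord_irr ord_trans _] := ord_i isT.
move=> /block_sumP Ym0 /block_sumP Yp0 /block_sumP Ym0' /block_sumP Yp0' eqY.
suff eqm : Ym = Ym' by split=> //; move: eqY; rewrite eqm => /addrI.
apply: (can_inj (fun Y => conjmxVK Y P_unit)); apply/matrixP => a l.
have entryD (A B : 'M[C]_n) : (A + B) a l = A a l + B a l by rewrite mxE.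
move/(congr1 (conjmx (invmx P)))/matrixP/(_ a l): eqY.
rewrite !conjmxD !entryD => eq_al.
case: (classic (ord i (eigtuple i l) (eigtuple i a))) => [lt_la|nlt]; last first.
  by rewrite Ym0 // Ym0'.
have Ja := inJ_eigtuple i a; have Jl := inJ_eigtuple i l.
have nsel : ~ (eigtuple i a = eigtuple i l \/ ord i (eigtuple i a) (eigtuple i l)).
  case=> [ea | lt_al]; first by apply: (ord_irr _ Jl); rewrite -{2}ea.
  exact: (ord_irr _ Jl (ord_trans _ _ _ Jl Ja Jl lt_la lt_al)).
by move: eq_al; rewrite Yp0 // Yp0' // !addr0.
Qed.

End EigenBasis.

Definition lower_terms {n : nat} (bm bp : nat -> 'M[C]_n) (N : nat) : 'M[C]_n :=
  \sum_(j < N) bm j.+1 *m bp (N - j)%N.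

Lemma trunc_mulS {n : nat} (bm bp : nat -> 'M[C]_n) N : inB bm -> inB bp ->
  trunc_mul bm bp N.+1 = bm N.+1 + bp N.+1 + lower_terms bm bp N.
Proof.
rewrite /trunc_mul /lower_terms => bm0 bp0.
rewrite big_ord_recl big_ord_recr /= subn0 subnn bm0 bp0 mul1mx mulmx1.
by rewrite [_ + bm _]addrC addrA [bp _ + _]addrC; congr (_ + _); apply: eq_bigr.
Qed.

Lemma eq_trunc_mul {n : nat} (a a' c c' : nat -> 'M[C]_n) m :
  (forall j, (j <= m)%N -> a j = a' j /\ c j = c' j) ->
  trunc_mul a c m = trunc_mul a' c' m.
Proof.
move=> eq_ac; apply: eq_bigr => j _.
by have [-> _] := eq_ac j (ltn_ord j); have [_ ->] := eq_ac (m - j)%N (leq_subr _ _).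
Qed.

Lemma eq_lower_terms {n : nat} (a a' c c' : nat -> 'M[C]_n) N :
  (forall j, (j <= N)%N -> a j = a' j /\ c j = c' j) ->
  lower_terms a c N = lower_terms a' c' N.
Proof.
move=> eq_ac; apply: eq_bigr => j _.
by have [-> _] := eq_ac j.+1 (ltn_ord j); have [_ ->] := eq_ac (N - j)%N (leq_subr _ _).
Qed.

Section GradedFactorization.

Variables (n k : nat) (Um Pp : nat -> 'M[C]_n -> Prop).

Definition graded (Q : nat -> 'M[C]_n -> Prop) (b : nat -> 'M[C]_n) : Prop :=
  inB b /\ forall i, (1 <= i <= k.-1)%N -> Q i (b i).

Hypothesis decomp : forall i X, (1 <= i <= k.-1)%N ->
  exists Xm Xp, [/\ Um i Xm, Pp i Xp & X = Xm + Xp].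

Hypothesis decomp_unique : forall i Ym Yp Ym' Yp', (1 <= i <= k.-1)%N ->
  Um i Ym -> Pp i Yp -> Um i Ym' -> Pp i Yp' -> Ym + Yp = Ym' + Yp' ->
  Ym = Ym' /\ Yp = Yp'.

Lemma graded_factor_upto b N : inB b -> (N <= k.-1)%N ->
  exists bm bp, [/\ inB bm, inB bp,
    (forall i, (1 <= i <= N)%N -> Um i (bm i) /\ Pp i (bp i))
  & forall m, (m <= N)%N -> b m = trunc_mul bm bp m].
Proof.
move=> b0; elim: N => [_ | N IH lt_N].
  exists (fun=> 1%:M), (fun=> 1%:M); split=> // [i | m]; first by lia.
  by rewrite leqn0 => /eqP ->; rewrite /trunc_mul big_ord1 mulmx1.
have [bm [bp [bm0 bp0 graded_bmp eq_b]]] := IH (ltnW lt_N).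
have lvl : (1 <= N.+1 <= k.-1)%N by lia.
have [Ym [Yp [Um_Y Pp_Y eqY]]] := decomp _ (b N.+1 - lower_terms bm bp N) lvl.
pose bm' x := if x == N.+1 then Ym else bm x.
pose bp' x := if x == N.+1 then Yp else bp x.
have agree j : (j <= N)%N -> bm' j = bm j /\ bp' j = bp j.
  move=> le_jN; have /negbTE ne_j : j != N.+1 by lia.
  by rewrite /bm' /bp' ne_j.
exists bm', bp'; split=> // [i le_i | m].
  rewrite /bm' /bp'; case: eqP => [-> // | ne_i]; apply: graded_bmp; lia.
rewrite leq_eqVlt ltnS => /orP [/eqP -> | le_m].
  rewrite trunc_mulS // (eq_lower_terms bm' bm bp' bp) // /bm' /bp' !eqxx.
  by rewrite -eqY subrK.
by rewrite eq_b // (eq_trunc_mul bm' bm bp' bp) // => j le_j; apply: agree; lia.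
Qed.

Lemma graded_factor_exists b : inB b ->
  exists bm bp, [/\ graded Um bm, graded Pp bp & eqk k b (trunc_mul bm bp)].
Proof.
move=> b0; have [bm [bp [bm0 bp0 graded_bmp eq_b]]] := graded_factor_upto b _ b0 (leqnn k.-1).
exists bm, bp; split=> [| | m lt_m]; last by apply: eq_b; lia.
- by split=> // i /graded_bmp [].
- by split=> // i /graded_bmp [].
Qed.

Lemma graded_factor_unique b bm bp bm' bp' :
  graded Um bm -> graded Pp bp -> eqk k b (trunc_mul bm bp) ->
  graded Um bm' -> graded Pp bp' -> eqk k b (trunc_mul bm' bp') ->
  eqk k bm bm' /\ eqk k bp bp'.
Proof.
move=> [bm0 Um_bm] [bp0 Pp_bp] eq_b [bm0' Um_bm'] [bp0' Pp_bp'] eq_b'.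
suff agree N : (N < k)%N -> forall j, (j <= N)%N -> bm j = bm' j /\ bp j = bp' j.
  by split=> m lt_m; have [] := agree m lt_m m (leqnn m).
elim: N => [_ j | N IH lt_N j].
  by rewrite leqn0 => /eqP ->; rewrite bm0 bm0' bp0 bp0'.
rewrite leq_eqVlt ltnS => /orP [/eqP -> | le_j]; last exact: IH (ltnW lt_N) j le_j.
have lvl : (1 <= N.+1 <= k.-1)%N by lia.
apply: (decomp_unique _ _ _ _ _ lvl (Um_bm _ lvl) (Pp_bp _ lvl) (Um_bm' _ lvl) (Pp_bp' _ lvl)).
apply: (addIr (lower_terms bm bp N)).
rewrite -trunc_mulS // -eq_b // eq_b' // trunc_mulS //.
by rewrite (eq_lower_terms bm' bm bp' bp) // => i /(IH (ltnW lt_N)) [-> ->].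
Qed.

End GradedFactorization.

Theorem lemma3p5 (n k : nat) (P : 'M[C]_n) (T : nat -> 'M[C]_n)
    (ord : nat -> seq C -> seq C -> Prop) :
  (1 < k)%N ->
  P \in unitmx ->
  (forall i : nat, (1 <= i <= k.-1)%N -> in_cartan P (T i)) ->
  T k.-1 != 0 ->
  (forall i : nat, (i <= k - 2)%N -> strict_total_on (inJ k T i) (ord i)) ->
  (forall (i : nat) (p q : seq C), (i < k - 2)%N ->
     inJ k T i p -> inJ k T i q ->
     ord i.+1 (behead p) (behead q) -> ord i p q) ->
  forall b : nat -> 'M[C]_n, inB b ->
    (exists bm bp : nat -> 'M[C]_n,
       [/\ in_Uminus k T ord bm, in_Pplus k T ord bp & eqk k b (trunc_mul bm bp)])
    /\
    (forall bm bp bm' bp' : nat -> 'M[C]_n,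
       in_Uminus k T ord bm -> in_Pplus k T ord bp -> eqk k b (trunc_mul bm bp) ->
       in_Uminus k T ord bm' -> in_Pplus k T ord bp' -> eqk k b (trunc_mul bm' bp') ->
       eqk k bm bm' /\ eqk k bp bp').
Proof.
move=> _ P_unit T_cartan _ ord_total _ b b0.
have D_diag t : (1 <= t <= k.-1)%N -> is_diag_mx (conjmx (invmx P) (T t)).
  by move=> lvl; exact: conjmx_cartan (T_cartan t lvl).
have ord_i i : (i < k.-1)%N -> strict_total_on (inJ k T i) (ord i).
  by move=> lt_i; apply: ord_total; lia.
split; first exact: (graded_factor_exists n k _ _
  (fun i X _ => uminus_pplus_decomp n k P T P_unit D_diag ord i X (ord_i i)) b b0).
move=> bm bp bm' bp'; apply: graded_factor_unique => i Ym Yp Ym' Yp' _.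
exact: (uminus_pplus_unique n k P T P_unit D_diag ord i Ym Yp Ym' Yp' (ord_i i)).
Qed.
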